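(* For every tournament $X$ on $n$ vertices, the Redei–Berge polynomial satisfies $u_X(-m)=(-1)^n u_X(m)$.
   Context: A tournament is a digraph $X=(V,E)$ ($V$ finite, $E\subset\{(u,v)\in V\times V\mid u\ne v\}$) such that for any two distinct vertices $u,v$ exactly one of $(u,v),(v,u)$ lies in $E$. $\Sigma_V$ is the set of bijections $\sigma:[n]\to V$, $X\mathrm{Des}(\sigma)=\{i\in[n-1]\mid(\sigma_i,\sigma_{i+1})\in E\}$; $F_I=\sum x_{i_1}\cdots x_{i_n}$ over $1\le i_1\le\cdots\le i_n$ with $i_j<i_{j+1}$ for $j\in I$; $U_X=\sum_{\sigma\in\Sigma_V}F_{X\mathrm{Des}(\sigma)}$; $u_X(m)$ is the polynomial in $m$ given by $U_X(1,\dots,1,0,\dots)$ with $m$ ones. *)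

From mathcomp Require Import all_boot all_order all_algebra.
Set Implicit Arguments. Unset Strict Implicit. Unset Printing Implicit Defensive.
Import GRing.Theory Num.Theory.

Definition is_tournament (V : finType) (E : rel V) : Prop :=
  (forall u, ~~ E u u) /\ (forall u v, u != v -> E u v (+) E v u).

(* Positions are 0-based: position j (j+1 < n) sits between sigma_j and
   sigma_{j+1}; it corresponds to the paper's i = j+1 in [n-1]. *)
Definition XDes (V : finType) (E : rel V) (n : nat) (sigma : {ffun 'I_n -> V})
  : pred nat :=
  fun j => [exists a : 'I_n, exists b : 'I_n,
             [&& nat_of_ord a == j, nat_of_ord b == j.+1 & E (sigma a) (sigma b)]].

(* F_I(1,...,1,0,...) with m ones = number of sequences
   1 <= i_1 <= ... <= i_n <= m (here values in 'I_m) with strict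
   increase at the positions in I. *)
Definition F1 (n m : nat) (I : pred nat) : nat :=
  #|[set s : {ffun 'I_n -> 'I_m} |
      [forall a : 'I_n, forall b : 'I_n,
         (nat_of_ord b == (nat_of_ord a).+1) ==>
           (if I a then s a < s b else s a <= s b)]]|.

(* U_X(1^m): sum over bijections sigma : [n] -> V (n = #|V|). *)
Definition U1 (V : finType) (E : rel V) (m : nat) : nat :=
  \sum_(sigma : {ffun 'I_#|V| -> V} | injectiveb sigma) F1 #|V| m (XDes E sigma).

From mathcomp Require Import all_boot all_order all_algebra zify ring.
Import GRing.Theory Num.Theory.
Set Implicit Arguments. Unset Strict Implicit. Unset Printing Implicit Defensive.

(* Adding to s_i the number of non-descents before position i turns an
   I-sequence 0 <= s_1 <= ... <= s_n < m (strict at I) into a strictly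
   increasing one, so F_I(1^m) = C(m + a, n), where a is the number of
   positions of [n-1] outside I.  Hence u_X(m) = sum_sigma C(m + a(sigma), n)
   is a polynomial, and C(-x + a, n) = (-1)^n C(x + n-1-a, n).  In a
   tournament each consecutive pair is oriented exactly one way, so reversing
   sigma swaps ascents and descents, a(sigma) becomes n-1-a(sigma), and the
   reciprocity follows by summing over the reversed permutations. *)

Definition asc (I : pred nat) (k : nat) : nat := \sum_(j < k) ~~ I j.

Lemma ascS I k : asc I k.+1 = asc I k + ~~ I k.
Proof. by rewrite /asc big_ord_recr. Qed.

Lemma asc_add_desc I k : asc I k + \sum_(j < k) I j = k.
Proof.
rewrite /asc -big_split /= (eq_bigr (fun=> 1)) => [|j _]; last exact: addn_negb.
by rewrite sum1_card card_ord.
Qed.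

Lemma asc_le I k : asc I k <= k.
Proof. by rewrite -[leqRHS](asc_add_desc I) leq_addr. Qed.

Lemma asc_mono I i k : i <= k -> asc I i <= asc I k <= asc I i + (k - i).
Proof.
move/subnKC <-; rewrite addKn; elim: (k - i) => [|j IHj]; first by rewrite !addn0 leqnn.
by rewrite addnS ascS; case: (I _) => /=; lia.
Qed.

Definition Fseq n m (I : pred nat) (s : {ffun 'I_n -> 'I_m}) : bool :=
  [forall a : 'I_n, forall b : 'I_n,
     (nat_of_ord b == (nat_of_ord a).+1) ==>
       (if I a then s a < s b else s a <= s b)].

Lemma FseqP n m (I : pred nat) (s : {ffun 'I_n -> 'I_m}) :
  reflect (forall a b : 'I_n, b = a.+1 :> nat -> if I a then s a < s b else s a <= s b)
          (Fseq I s).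
Proof.
apply: (iffP forallP) => [H a b hb | H a]; first by have /forallP/(_ b) := H a; rewrite hb eqxx.
by apply/forallP => b; apply/implyP => /eqP /H.
Qed.

Lemma F1E n m (I : pred nat) : F1 n m I = #|[set s : {ffun 'I_n -> 'I_m} | Fseq I s]|.
Proof. by []. Qed.

Lemma sorted_ordP n (r : rel nat) (g : 'I_n -> nat) :
  reflect (forall a b : 'I_n, b = a.+1 :> nat -> r (g a) (g b))
          (sorted r [seq g i | i <- enum 'I_n]).
Proof.
have nth_g k (hk : k < n) : nth 0 [seq g i | i <- enum 'I_n] k = g (Ordinal hk).
  by rewrite (nth_map (Ordinal hk)) ?size_enum_ord // (nth_ord_enum (Ordinal hk) (Ordinal hk)).
apply: (iffP (sortedP 0)); rewrite size_map size_enum_ord.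
- move=> H a b hb; have hab : a.+1 < n by rewrite -hb.
  have := H a hab; rewrite (nth_g _ (ltn_ord a)) (nth_g _ hab).
  by congr (r (g _) (g _)); apply: val_inj.
- move=> H k hk; rewrite (nth_g _ (ltnW hk)) (nth_g _ hk); exact: H.
Qed.

Lemma F1_strict n N : F1 n N predT = 'C(N, n).
Proof.
rewrite F1E -card_ltn_sorted_tuples.
pose ft (f : {ffun 'I_n -> 'I_N}) : n.-tuple 'I_N := [tuple f i | i < n].
have ftK : cancel ft (fun t => [ffun i => tnth t i]).
  by move=> f; apply/ffunP => i; rewrite ffunE tnth_mktuple.
have ft_sorted f : sorted ltn [seq val i | i <- ft f] = Fseq predT f.
  by rewrite /= -map_comp; apply/(sorted_ordP ltn (fun i => val (f i)))/FseqP => H a b /H.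
rewrite -(card_imset _ (can_inj ftK)); apply: eq_card => t; rewrite inE.
apply/imsetP/idP => [[f] | t_sorted]; first by rewrite inE => Hf ->; rewrite ft_sorted.
have tK : ft [ffun i => tnth t i] = t.
  by apply: eq_from_tnth => i; rewrite tnth_mktuple ffunE.
by exists [ffun i => tnth t i]; rewrite // inE -ft_sorted tK.
Qed.

Lemma ltn_chain_addn (g : nat -> nat) n :
  (forall k, k.+1 < n -> g k < g k.+1) -> forall k j, k + j < n -> g k + j <= g (k + j).
Proof.
move=> g_incr k; elim=> [|j IHj] kj_lt; first by rewrite !addn0.
rewrite addnS in kj_lt *.
by have := IHj (ltnW kj_lt); have := g_incr _ kj_lt; lia.
Qed.

Lemma Fseq_strict_bounds n N (t : {ffun 'I_n.+1 -> 'I_N}) :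
  Fseq predT t -> forall i : 'I_n.+1, i <= t i /\ t i + (n - i) < N.
Proof.
move=> /FseqP t_incr i; pose g k := nat_of_ord (t (inord k)).
have g_incr k : k.+1 < n.+1 -> g k < g k.+1.
  by move=> hk; apply: (t_incr (inord k)); rewrite !inordK // ltnW.
have i_le : i <= n by rewrite -ltnS.
have := ltn_chain_addn g_incr (k := 0) (j := i); rewrite add0n => /(_ (ltn_ord i)).
have := ltn_chain_addn g_incr (k := i) (j := n - i); rewrite subnKC // => /(_ (leqnn _)).
have := ltn_ord (t (inord n)); rewrite /g inord_val; lia.
Qed.

Lemma F1_shift n m I : F1 n.+1 m I = F1 n.+1 (m + asc I n) predT.
Proof.
have asc_bounds (i : 'I_n.+1) : asc I i <= asc I n <= asc I i + (n - i).
  by apply: asc_mono; rewrite -ltnS.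
have step x y (a : nat) : (if I a then x < y else x <= y) = (x + asc I a < y + asc I a.+1).
  by rewrite ascS; case: (I a) => /=; lia.
have shift_lt (s : {ffun 'I_n.+1 -> 'I_m}) i : s i + asc I i < m + asc I n.
  by have := asc_bounds i; have := ltn_ord (s i); lia.
pose shift s := [ffun i => Ordinal (shift_lt s i)].
have shift_inj : injective shift.
  move=> s1 s2 /ffunP e; apply/ffunP => i; apply/val_inj.
  by have := e i; rewrite !ffunE => /(congr1 val) /= /addIn.
rewrite !F1E -(card_imset _ shift_inj); apply: eq_card => t; rewrite [in RHS]inE.
apply/imsetP/idP => [[s] | /[dup] t_strict /FseqP t_incr].
  rewrite inE => /FseqP s_chain ->; apply/FseqP => a b hb /=.
  by rewrite !ffunE /= hb -step; apply: s_chain.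
have asc_le_t (i : 'I_n.+1) : asc I i <= t i.
  by have [i_le _] := Fseq_strict_bounds t_strict i; apply: leq_trans (asc_le I i) i_le.
have unshift_lt (i : 'I_n.+1) : t i - asc I i < m.
  have [_ hi] := Fseq_strict_bounds t_strict i; have /andP[_ hC] := asc_bounds i.
  rewrite ltn_subLR ?asc_le_t // -(ltn_add2r (n - i)).
  by apply: leq_trans hi _; lia.
exists [ffun i => Ordinal (unshift_lt i)].
  rewrite inE; apply/FseqP => a b hb; rewrite !ffunE /= step -hb !subnK //.
  exact: t_incr.
by apply/ffunP => i; apply/val_inj; rewrite !ffunE /= ffunE /= subnK.
Qed.

Lemma F1_binomial n m I : F1 n m I = 'C(m + asc I n.-1, n).
Proof.
case: n => [|n]; last by rewrite F1_shift F1_strict.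
rewrite bin0 F1E (_ : [set s | _] = setT) ?cardsT ?card_ffun ?card_ord //.
by apply/setP => s; rewrite !inE; apply/FseqP => -[].
Qed.

Lemma tournamentN (V : finType) (E : rel V) u v :
  is_tournament E -> u != v -> ~~ E u v = E v u.
Proof. by case=> _ /(_ u v) tE /tE; case: (E u v); case: (E v u). Qed.

Definition rev_ffun (T : Type) n (s : {ffun 'I_n -> T}) : {ffun 'I_n -> T} :=
  [ffun i => s (rev_ord i)].

Lemma rev_ffunK (T : Type) n : involutive (@rev_ffun T n).
Proof. by move=> s; apply/ffunP => i; rewrite !ffunE rev_ordK. Qed.

Lemma injectiveb_rev_ffun (T : eqType) n (s : {ffun 'I_n -> T}) :
  injectiveb (rev_ffun s) = injectiveb s.
Proof.
apply/injectiveP/injectiveP => s_inj i j; last by rewrite !ffunE => /s_inj /rev_ord_inj.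
by move=> e; apply/rev_ord_inj/s_inj; rewrite !ffunE !rev_ordK.
Qed.

Lemma XDesE (V : finType) (E : rel V) n (s : {ffun 'I_n -> V}) (a b : 'I_n) :
  b = a.+1 :> nat -> XDes E s a = E (s a) (s b).
Proof.
move=> hb; apply/existsP/idP => [[a' /existsP[b' /and3P[/eqP ha /eqP hb']]] | Esab].
  have <- : a = a' by apply/val_inj; rewrite /= ha.
  by have <- : b = b' by apply/val_inj; rewrite /= hb hb'.
by exists a; apply/existsP; exists b; rewrite eqxx hb eqxx.
Qed.

Lemma asc_XDes_rev_ffun (V : finType) (E : rel V) n (s : {ffun 'I_n -> V}) :
  is_tournament E -> injective s ->
  asc (XDes E (rev_ffun s)) n.-1 = n.-1 - asc (XDes E s) n.-1.
Proof.
case: n s => [|n] s tE s_inj /=; first by rewrite /asc !big_ord0.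
have flip (j : 'I_n) : ~~ XDes E (rev_ffun s) j = XDes E s (rev_ord j).
  rewrite (@XDesE _ E _ _ (widen_ord (leqnSn n) j) (lift ord0 j)) ?lift0 //.
  rewrite (@XDesE _ E _ _ (widen_ord (leqnSn n) (rev_ord j)) (lift ord0 (rev_ord j)))
    ?lift0 // !ffunE.
  have -> : rev_ord (widen_ord (leqnSn n) j) = lift ord0 (rev_ord j).
    by apply: val_inj; rewrite /= /bump /=; have := ltn_ord j; lia.
  have -> : rev_ord (lift ord0 j) = widen_ord (leqnSn n) (rev_ord j).
    by apply: val_inj; rewrite /= /bump /=; lia.
  by rewrite tournamentN // (inj_eq s_inj) -val_eqE /= /bump /=; lia.
rewrite -[X in X - _](asc_add_desc (XDes E s) n) addKn /asc.
under eq_bigr => j _ do rewrite flip.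
by rewrite [RHS](reindex_inj rev_ord_inj).
Qed.

Local Open Scope ring_scope.

Lemma natr_ffact (R : pzRingType) (N n : nat) :
  (N ^_ n)%:R = \prod_(i < n) (N%:R - i%:R) :> R.
Proof.
elim: n => [|n IHn]; first by rewrite ffactn0 big_ord0.
rewrite ffactnSr big_ord_recr /= natrM IHn.
have [n_le | N_lt] := leqP n N; first by rewrite natrB.
by rewrite -IHn ffact_small // !mul0r.
Qed.

Section BinomialPolynomial.
Variable R : numFieldType.

Definition binom_poly (n k : nat) : {poly R} :=
  (n`!%:R)^-1 *: \prod_(i < n) ('X + (k%:R - i%:R)%:P).

Lemma horner_binom_poly n k x :
  (binom_poly n k).[x] = (n`!%:R)^-1 * \prod_(i < n) (x + (k%:R - i%:R)).
Proof.
rewrite hornerZ horner_prod; congr (_ * _); apply: eq_bigr => i _.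
by rewrite hornerD hornerX hornerC.
Qed.

Lemma binom_poly_nat n k m : (binom_poly n k).[m%:R] = 'C(m + k, n)%:R.
Proof.
rewrite horner_binom_poly (eq_bigr (fun i : 'I_n => (m + k)%:R - i%:R)); last first.
  by move=> i _; rewrite natrD addrA.
rewrite -natr_ffact -bin_ffact natrM mulrCA mulVf ?mulr1 //.
by rewrite pnatr_eq0 -lt0n fact_gt0.
Qed.

Lemma binom_polyN n k x : (k <= n.-1)%N ->
  (binom_poly n k).[- x] = (-1) ^+ n * (binom_poly n (n.-1 - k)).[x].
Proof.
move=> k_le; rewrite !horner_binom_poly mulrCA; congr (_ * _).
case: n k_le => [|n] k_le; first by rewrite !big_ord0 expr0 mulr1.
rewrite [in RHS](reindex_inj rev_ord_inj) /=.
transitivity (\prod_(i < n.+1) - (x + ((n - k)%:R - (n.+1 - i.+1)%:R))).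
  apply: eq_bigr => i _; have i_le : (i <= n)%N by rewrite -ltnS.
  by rewrite subSS !natrB //; ring.
by rewrite prodrN card_ord.
Qed.

End BinomialPolynomial.

Theorem mainTheorem18 (V : finType) (E : rel V) :
  is_tournament E ->
  exists p : {poly rat},
    (forall m : nat, p.[m%:R] = (U1 E m)%:R) /\
    (forall x : rat, p.[- x] = (-1) ^+ #|V| * p.[x]).
Proof.
move=> tE; pose a (s : {ffun 'I_#|V| -> V}) := asc (XDes E s) #|V|.-1.
exists (\sum_(s : {ffun 'I_#|V| -> V} | injectiveb s) binom_poly rat #|V| (a s)).
split => [m | x].
  rewrite horner_sum /U1 natr_sum; apply: eq_bigr => s _.
  by rewrite binom_poly_nat F1_binomial.
rewrite !horner_sum mulr_sumr (reindex_inj (can_inj (@rev_ffunK V #|V|))) /=.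
apply: eq_big => [s | s]; first by rewrite injectiveb_rev_ffun.
rewrite injectiveb_rev_ffun => /injectiveP s_inj.
by rewrite binom_polyN ?asc_le // /a asc_XDes_rev_ffun // subKn ?asc_le.
Qed.
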